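(* In the LCD setting of the context, with generic parameters, fix a context $k$ whose intervention target is node $k$, and let $D^{(k)}\in\mathbb{R}^{q\times q}$ be diagonal with $D^{(k)}_{j,j}\in\{1,-1\}$ for $j\neq k$ and $D^{(k)}_{k,k}\notin\{0,1,-1\}$. For $j_1,j_2\in\mathrm{an}(k)$, there exists $\alpha\in\mathbb{R}$ such that $$(I-\Lambda^{(0)})^{-1}_{i,j_1}-\big((I-\Lambda^{(k)})^{-1}D^{(k)}\big)_{i,j_2}=\alpha\Big((I-\Lambda^{(0)})^{-1}_{i,k}-\big((I-\Lambda^{(k)})^{-1}D^{(k)}\big)_{i,k}\Big)$$ for all $i\in[q]$ if and only if $j_1=j_2$ and $D^{(k)}_{j_1,j_1}=1$.
   Context: LCD setting: $\Lambda^{(0)}\in\mathbb{R}^{q\times q}$ with $\lambda^{(0)}_{i,j}\ne0$ iff $j\to i$ is an edge of a DAG $\mathcal{G}$ on $[q]$, with generic nonzero entries; $\Lambda^{(k)}$ agrees with $\Lambda^{(0)}$ except in row $k$, which is either zero (perfect intervention) or has generic entries with $\lambda^{(k)}_{k,j}\ne\lambda^{(0)}_{k,j}$ whenever $\lambda^{(0)}_{k,j}\ne0$ (soft intervention). $\mathrm{an}(k)$ is the set of ancestors of $k$ in $\mathcal{G}$ (nodes $m\ne k$ with a directed path $m\to\cdots\to k$). *)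

From mathcomp Require Import all_boot all_order all_algebra.
From mathcomp Require Import reals.
Set Implicit Arguments. Unset Strict Implicit. Unset Printing Implicit Defensive.
Import Order.TTheory GRing.Theory Num.Theory.
Local Open Scope ring_scope.

(* A directed graph on [q] = 'I_q, given by E : rel 'I_q where E j i means
   that j -> i is an edge. It is a DAG when no edge closes a directed cycle
   (connect E is the reflexive-transitive closure; this also forbids self-loops). *)
Definition is_DAG (q : nat) (E : rel 'I_q) : Prop :=
  forall i j, E i j -> ~~ connect E j i.

Definition an (q : nat) (E : rel 'I_q) (k : 'I_q) : {set 'I_q} :=
  [set m | (m != k) && connect E m k].

Definition LCD_observational (R : realType) (q : nat) (E : rel 'I_q)
  (L0 : 'M[R]_q) : Prop :=
  forall i j, (L0 i j != 0) = E j i.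

(* Lambda^(k) agrees with Lambda^(0) outside row k; row k is either zero
   (perfect intervention) or a soft intervention: same support as row k of
   Lambda^(0) (i.e. the parents of k), with every entry on an edge changed. *)
Definition LCD_intervention (R : realType) (q : nat) (E : rel 'I_q)
  (k : 'I_q) (L0 Lk : 'M[R]_q) : Prop :=
  (forall i j, i != k -> Lk i j = L0 i j) /\
  ((forall j, Lk k j = 0) \/
   (forall j, (Lk k j != 0) = E j k /\ (L0 k j != 0 -> Lk k j != L0 k j))).

From mathcomp Require Import all_boot all_order all_algebra.
From mathcomp Require Import reals.
From mathcomp Require Import ring.
Import Order.TTheory GRing.Theory Num.Theory.
Local Open Scope ring_scope.
Set Implicit Arguments.
Unset Strict Implicit.
Unset Printing Implicit Defensive.

(* Write B0 = (I - L0)^-1, Bk = (I - Lk)^-1 and C = (I - L0) Bk.  As I - L0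
   and I - Lk differ only in row k, C is the identity outside row k, so
   Bk = B0 C only adds multiples of column k of B0 to the other columns:
   Bk_{.j} = B0_{.j} + (C_{kj} - [k = j]) B0_{.k}.  Acyclicity gives C_{kk} = 1
   (column k of Bk vanishes at the parents of k), so B0 and Bk share column k,
   which yields alpha when j1 = j2 and D_{j1 j1} = 1.  Conversely, multiplying
   the relation by row j1 <> k of I - L0 leaves 1 - [j1 = j2] D_{j2 j2} = 0. *)

Definition edge_supported (R : nmodType) (q : nat) (E : rel 'I_q)
    (L : 'M[R]_q) :=
  forall i j, L i j != 0 -> E j i.

Definition coldiff_proportional (R : pzRingType) (n : nat) (B B' : 'M[R]_n)
    (j1 j2 k : 'I_n) :=
  exists alpha : R, forall i, B i j1 - B' i j2 = alpha * (B i k - B' i k).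

Lemma is_DAG_ind (q : nat) (E : rel 'I_q) (P : 'I_q -> Prop) : is_DAG E ->
  (forall m, (forall i, E i m -> P i) -> P m) -> forall m, P m.
Proof.
move=> dagE IH m; move: {2}#|_| (leqnn #|[set a | connect E a m]|) => n.
elim: n m => [|n IHn] m.
  by rewrite leqn0 => /eqP/cards0_eq/setP/(_ m); rewrite !inE connect0.
move=> le_anc_n; apply: IH => i Eim; apply: IHn; rewrite -ltnS.
apply: leq_trans le_anc_n; apply: proper_card; apply/properP; split.
  by apply/subsetP => a; rewrite !inE => /connect_trans; apply; apply: connect1.
by exists m; rewrite !inE ?connect0 //; apply: dagE.
Qed.

Section DAGInverse.
Variables (R : fieldType) (q : nat) (E : rel 'I_q).
Hypothesis dagE : is_DAG E.

Lemma edge_supported_1B_inj (L : 'M[R]_q) (x : 'cV[R]_q) :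
  edge_supported E L -> (1%:M - L) *m x = 0 -> x = 0.
Proof.
move=> suppL; rewrite mulmxBl mul1mx => /eqP; rewrite subr_eq0 => /eqP x_fix.
apply/matrixP => i j; rewrite ord1 mxE.
move: i; apply: (is_DAG_ind dagE) => m IH.
rewrite x_fix mxE big1 // => l _.
by have [->|/suppL/IH->] := eqVneq (L m l) 0; rewrite (mul0r, mulr0).
Qed.

Lemma unitmx_1B (L : 'M[R]_q) : edge_supported E L -> (1%:M - L) \in unitmx.
Proof.
move=> suppL; rewrite -unitmx_tr -row_free_unit; apply: inj_row_free => v v0.
apply: trmx_inj; rewrite trmx0; apply: edge_supported_1B_inj suppL _.
by rewrite -[LHS]trmxK trmx_mul trmxK v0 trmx0.
Qed.

Lemma invmx_1BE (L : 'M[R]_q) :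
  edge_supported E L -> invmx (1%:M - L) = 1%:M + L *m invmx (1%:M - L).
Proof.
move=> suppL; apply/eqP; rewrite -subr_eq -[X in X - _]mul1mx -mulmxBl.
by rewrite mulmxV // unitmx_1B.
Qed.

Lemma invmx_1B_eq0 (L : 'M[R]_q) (k m : 'I_q) :
  edge_supported E L -> ~~ connect E k m -> invmx (1%:M - L) m k = 0.
Proof.
move=> suppL; move: m; apply: (is_DAG_ind dagE) => m IH not_km.
have mk : m != k by apply: contraNneq not_km => ->; rewrite connect0.
rewrite invmx_1BE // !mxE (negbTE mk) add0r big1 // => l _.
have [->|/suppL Elm] := eqVneq (L m l) 0; first by rewrite mul0r.
rewrite IH ?mulr0 //; apply: contra not_km => /connect_trans; apply.
exact: connect1.
Qed.

Lemma mulmx_invmx_1B_diag (L L' : 'M[R]_q) (k : 'I_q) :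
  edge_supported E L -> edge_supported E L' ->
  (L *m invmx (1%:M - L')) k k = 0.
Proof.
move=> suppL suppL'; rewrite mxE big1 // => l _.
have [->|/suppL Elk] := eqVneq (L k l) 0; first by rewrite mul0r.
by rewrite invmx_1B_eq0 ?mulr0 //; apply: dagE.
Qed.

Lemma invmx_1B_diag (L : 'M[R]_q) (k : 'I_q) :
  edge_supported E L -> invmx (1%:M - L) k k = 1.
Proof.
move=> suppL.
by rewrite invmx_1BE // mxE (mulmx_invmx_1B_diag k suppL suppL) mxE eqxx addr0.
Qed.

Lemma mulmx_1B_invmx_1B_diag (L L' : 'M[R]_q) (k : 'I_q) :
  edge_supported E L -> edge_supported E L' ->
  ((1%:M - L) *m invmx (1%:M - L')) k k = 1.
Proof.
move=> suppL suppL'.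
rewrite mulmxBl mul1mx mxE [in X in _ + X]mxE invmx_1B_diag //.
by rewrite mulmx_invmx_1B_diag // subr0.
Qed.

End DAGInverse.

Lemma mulmx_diag_entry (R : pzSemiRingType) (n : nat) (D : 'M[R]_n) :
  (forall i j, i != j -> D i j = 0) ->
  forall (X : 'M[R]_n) (i j : 'I_n), (X *m D) i j = X i j * D j j.
Proof.
move=> Ddiag X i j; rewrite mxE (bigD1 j) //= big1 ?addr0 // => l lj.
by rewrite Ddiag ?mulr0.
Qed.

Section RowUpdate.
Variables (R : fieldType) (n : nat) (A0 Ak : 'M[R]_n) (k : 'I_n).
Hypotheses (A0_unit : A0 \in unitmx) (Ak_unit : Ak \in unitmx).
Hypothesis A0_Ak_off : forall i j : 'I_n, i != k -> A0 i j = Ak i j.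

Lemma mulmx_invmx_row_update (i j : 'I_n) :
  i != k -> (A0 *m invmx Ak) i j = (i == j)%:R.
Proof.
move=> ik; rewrite -[A0](subrK Ak) mulmxDl mulmxV // mxE [X in X + _]mxE.
rewrite big1 ?add0r ?mxE // => l _.
by rewrite !mxE A0_Ak_off // subrr mul0r.
Qed.

Lemma invmx_row_update (i j : 'I_n) :
  invmx Ak i j
  = invmx A0 i j + invmx A0 i k * ((A0 *m invmx Ak) k j - (k == j)%:R).
Proof.
have Ak_inv : invmx Ak = invmx A0 *m (A0 *m invmx Ak).
  by rewrite mulmxA mulVmx // mul1mx.
rewrite {1}Ak_inv mxE (bigD1 k) //= mulrBr addrCA; congr (_ + _).
have [<-|kj] := eqVneq k j.
  rewrite mulr1 subrr big1 // => l lk.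
  by rewrite mulmx_invmx_row_update // (negbTE lk) mulr0.
rewrite mulr0 subr0 (bigD1 j) 1?eq_sym //=.
rewrite mulmx_invmx_row_update 1?eq_sym // eqxx mulr1.
rewrite big1 ?addr0 // => l /andP[lk lj].
by rewrite mulmx_invmx_row_update // (negbTE lj) mulr0.
Qed.

Variable D : 'M[R]_n.
Hypothesis D_diag : forall i j : 'I_n, i != j -> D i j = 0.

Lemma coldiff_proportional_row_update_eq (j1 j2 : 'I_n) :
  j1 != k -> coldiff_proportional (invmx A0) (invmx Ak *m D) j1 j2 k ->
  j1 = j2 /\ D j1 j1 = 1.
Proof.
move=> j1k [alpha prop_cols].
have row_j1 (B : 'M[R]_n) (j j' : 'I_n) :
    \sum_i A0 j1 i * (invmx A0 i j - B i j') = (j1 == j)%:R - (A0 *m B) j1 j'.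
  have -> : (j1 == j)%:R = (A0 *m invmx A0) j1 j by rewrite mulmxV // mxE.
  rewrite !mxE -sumrB.
  by apply: eq_bigr => i _; rewrite mulrBr.
have : \sum_i A0 j1 i * (invmx A0 i j1 - (invmx Ak *m D) i j2)
       = alpha * \sum_i A0 j1 i * (invmx A0 i k - (invmx Ak *m D) i k).
  by rewrite mulr_sumr; apply: eq_bigr => i _; rewrite prop_cols mulrCA.
rewrite !row_j1 !mulmxA !(mulmx_diag_entry D_diag).
rewrite !mulmx_invmx_row_update // eqxx (negbTE j1k) mul0r subrr mulr0 mulr1n.
have [<-|j1j2] := eqVneq j1 j2.
  by rewrite mul1r => /eqP; rewrite subr_eq0 => /eqP <-.
by rewrite mul0r subr0 => /eqP; rewrite oner_eq0.
Qed.

Lemma coldiff_proportional_row_update (j : 'I_n) :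
  (A0 *m invmx Ak) k k = 1 -> D k k != 1 -> D j j = 1 ->
  coldiff_proportional (invmx A0) (invmx Ak *m D) j j k.
Proof.
move=> Ckk Dk1 Dj1.
have col_k i : invmx Ak i k = invmx A0 i k.
  by rewrite invmx_row_update Ckk eqxx subrr mulr0 addr0.
have Dk1' : 1 - D k k != 0 by rewrite subr_eq0 eq_sym.
exists (- ((A0 *m invmx Ak) k j - (k == j)%:R) / (1 - D k k)) => i.
rewrite !(mulmx_diag_entry D_diag) Dj1 mulr1 col_k invmx_row_update.
by field.
Qed.
End RowUpdate.

Lemma LCD_observational_edge_supported (R : realType) (q : nat) (E : rel 'I_q)
    (L0 : 'M[R]_q) :
  LCD_observational E L0 -> edge_supported E L0.
Proof. by move=> obs i j; rewrite obs. Qed.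

Lemma LCD_intervention_edge_supported (R : realType) (q : nat) (E : rel 'I_q)
    (k : 'I_q) (L0 Lk : 'M[R]_q) :
  LCD_observational E L0 -> LCD_intervention E k L0 Lk -> edge_supported E Lk.
Proof.
move=> obs [off_k row_k] i j; have [->|ik] := eqVneq i k.
  by case: row_k => [->|/(_ j)[-> _]]; rewrite ?eqxx.
by rewrite off_k // obs.
Qed.

Lemma LCD_intervention_1B_off (R : realType) (q : nat) (E : rel 'I_q)
    (k : 'I_q) (L0 Lk : 'M[R]_q) :
  LCD_intervention E k L0 Lk ->
  forall i j, i != k -> (1%:M - L0) i j = (1%:M - Lk) i j.
Proof. by move=> [off_k _] i j ik; rewrite !mxE off_k. Qed.

Theorem proposition2p9 (R : realType) (q : nat) (E : rel 'I_q)
  (L0 Lk D : 'M[R]_q) (k : 'I_q) :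
  is_DAG E ->
  LCD_observational E L0 ->
  LCD_intervention E k L0 Lk ->
  (forall i j, i != j -> D i j = 0) ->
  (forall j, j != k -> D j j = 1 \/ D j j = -1) ->
  D k k != 0 -> D k k != 1 -> D k k != -1 ->
  forall j1 j2, j1 \in an E k -> j2 \in an E k ->
  (exists alpha : R, forall i : 'I_q,
      invmx (1%:M - L0) i j1 - (invmx (1%:M - Lk) *m D) i j2
      = alpha * (invmx (1%:M - L0) i k - (invmx (1%:M - Lk) *m D) i k))
  <-> (j1 = j2 /\ D j1 j1 = 1).
Proof.
move=> dagE obs intv Ddiag _ _ Dk1 _ j1 j2; rewrite inE => /andP[j1k _] _.
have supp0 := LCD_observational_edge_supported obs.
have suppk := LCD_intervention_edge_supported obs intv.
have off_k := LCD_intervention_1B_off intv.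
have unit0 := unitmx_1B dagE supp0; have unitk := unitmx_1B dagE suppk.
split=> [prop | [<- Dj1]].
  exact (coldiff_proportional_row_update_eq unit0 unitk off_k Ddiag j1k prop).
have Ckk := mulmx_1B_invmx_1B_diag dagE k supp0 suppk.
exact (coldiff_proportional_row_update unit0 unitk off_k Ddiag Ckk Dk1 Dj1).
Qed.
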